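(* Let $h:\mathbb{R}\to\mathbb{R}$ be continuous and let $u_1,u_2$ be linearly independent real solutions of $u''(x)+h(x)u(x)=0$. (i) For any matrix in $GL(2,\mathbb{R})$, the pair of solutions obtained by applying it to $(u_1,u_2)$ is again linearly independent, so the action of $GL(2,\mathbb{R})$ on the span of the solutions induces (via the map of the context) a local isomorphism of the Poincaré upper half plane $\mathbb{H}$. (ii) For real constants $A,B$, not both zero, let $u(x)=Au_1(x)+Bu_2(x)$ and \[ Y(x,\varPhi)=\frac{\varPhi}{\varPhi^2[u(x)]^2+[u'(x)]^2}. \] Then $Y$ (depending on the two parameters $A,B$) is a complete integral of the partial differential equation \[ \left(\frac{\varPhi}{h(x)-\varPhi^{2}}\frac{\partial Y}{\partial x}(x,\varPhi)\right)^{2}+\left(\varPhi\frac{\partial Y}{\partial\varPhi}(x,\varPhi)\right)^{2}=Y^2(x,\varPhi) \] on $\{(x,\varPhi)\mid\varPhi>0,\ \varPhi^2\neq h(x)\}$.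
   Context: For linearly independent solutions $v_1,v_2$ of $u''+hu=0$ with Wronskian $W=v_1'v_2-v_1v_2'$, the map $(x,\varPhi)\mapsto(X,Y)$, $X=X_0\pm W^{-1}\frac{\varPhi^2v_1v_2+v_1'v_2'}{\varPhi^2v_1^2+(v_1')^2}$, $Y=\frac{\varPhi}{\varPhi^2v_1^2+(v_1')^2}$, is a local diffeomorphism pulling back $g_{\mathbb{H}}=(dX^2+dY^2)/Y^2$ on $\{Y>0\}$ to $g_h=\left[(h(x)-\varPhi^2)^2dx^2+d\varPhi^2\right]/\varPhi^2$ on $\{\varPhi>0,\ \varPhi^2\neq h(x)\}$. *)

From Stdlib Require Import Reals.
From Coquelicot Require Import Coquelicot.
Open Scope R_scope.

Definition is_sol (h u : R -> R) : Prop :=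
  forall x, ex_derive u x /\ is_derive (Derive u) x (- h x * u x).

Definition lin_indep (v1 v2 : R -> R) : Prop :=
  forall a b : R, (forall x, a * v1 x + b * v2 x = 0) -> a = 0 /\ b = 0.

Definition Dom (h : R -> R) (x Phi : R) : Prop := 0 < Phi /\ Phi ^ 2 <> h x.

Definition pdx (f : R -> R -> R) (x y : R) : R := Derive (fun t => f t y) x.
Definition pdy (f : R -> R -> R) (x y : R) : R := Derive (fun s => f x s) y.

Definition C1_on (V : R * R -> Prop) (f : R -> R -> R) : Prop :=
  forall p : R * R, V p ->
    ex_derive (fun t => f t (snd p)) (fst p) /\
    ex_derive (fun s => f (fst p) s) (snd p) /\
    continuous (fun q : R * R => pdx f (fst q) (snd q)) p /\
    continuous (fun q : R * R => pdy f (fst q) (snd q)) p.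

Definition local_diffeo (U : R -> R -> Prop) (X Y : R -> R -> R) : Prop :=
  forall x0 y0, U x0 y0 ->
  exists (V W : R * R -> Prop) (G1 G2 : R -> R -> R),
    open V /\ open W /\ V (x0, y0) /\
    (forall p : R * R, V p -> U (fst p) (snd p)) /\
    (forall p : R * R, V p ->
        W (X (fst p) (snd p), Y (fst p) (snd p)) /\
        G1 (X (fst p) (snd p)) (Y (fst p) (snd p)) = fst p /\
        G2 (X (fst p) (snd p)) (Y (fst p) (snd p)) = snd p) /\
    (forall w : R * R, W w ->
        V (G1 (fst w) (snd w), G2 (fst w) (snd w)) /\
        X (G1 (fst w) (snd w)) (G2 (fst w) (snd w)) = fst w /\
        Y (G1 (fst w) (snd w)) (G2 (fst w) (snd w)) = snd w) /\
    C1_on V X /\ C1_on V Y /\ C1_on W G1 /\ C1_on W G2.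

(* The pull-back of g_H = (dX^2+dY^2)/Y^2 by (X,Y) equals
   g_h = [(h(x)-Phi^2)^2 dx^2 + dPhi^2]/Phi^2 at every point of U,
   and (X,Y) lands in the upper half plane {Y > 0}. *)
Definition pullback_gH_is_gh (h : R -> R) (U : R -> R -> Prop) (X Y : R -> R -> R) : Prop :=
  forall x Phi, U x Phi ->
    0 < Y x Phi /\
    (pdx X x Phi ^ 2 + pdx Y x Phi ^ 2) / (Y x Phi) ^ 2 = (h x - Phi ^ 2) ^ 2 / Phi ^ 2 /\
    (pdx X x Phi * pdy X x Phi + pdx Y x Phi * pdy Y x Phi) / (Y x Phi) ^ 2 = 0 /\
    (pdy X x Phi ^ 2 + pdy Y x Phi ^ 2) / (Y x Phi) ^ 2 = 1 / Phi ^ 2.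

Definition wronsk (v1 v2 : R -> R) (x : R) : R :=
  Derive v1 x * v2 x - v1 x * Derive v2 x.

(* The map of the context; s = +1 or -1 encodes the sign choice. *)
Definition ctxX (v1 v2 : R -> R) (X0 s : R) (x Phi : R) : R :=
  X0 + s * / wronsk v1 v2 x *
    ((Phi ^ 2 * v1 x * v2 x + Derive v1 x * Derive v2 x)
       / (Phi ^ 2 * (v1 x) ^ 2 + (Derive v1 x) ^ 2)).

Definition ctxY (v1 : R -> R) (x Phi : R) : R :=
  Phi / (Phi ^ 2 * (v1 x) ^ 2 + (Derive v1 x) ^ 2).

Definition solves_PDE (h : R -> R) (U : R -> R -> Prop) (Y : R -> R -> R) : Prop :=
  forall x Phi, U x Phi ->
    ex_derive (fun t => Y t Phi) x /\ ex_derive (fun s => Y x s) Phi /\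
    (Phi / (h x - Phi ^ 2) * pdx Y x Phi) ^ 2 + (Phi * pdy Y x Phi) ^ 2 = (Y x Phi) ^ 2.

(* Complete integral (classical sense) of the PDE on U, for a two-parameter
   family Yp A B, parameters ranging over P: every member solves the PDE, and
   the 2x3 matrix  [[Y_A, Y_xA, Y_PhiA], [Y_B, Y_xB, Y_PhiB]]  has rank 2
   (its two rows are linearly independent) at every point. *)
Definition complete_integral (h : R -> R) (U : R -> R -> Prop) (P : R -> R -> Prop)
    (Yp : R -> R -> R -> R -> R) : Prop :=
  (forall A B, P A B -> solves_PDE h U (Yp A B)) /\
  (forall A B x Phi, P A B -> U x Phi ->
    let rA1 := fun a => Yp a B x Phi in
    let rA2 := fun a => pdx (Yp a B) x Phi in
    let rA3 := fun a => pdy (Yp a B) x Phi in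
    let rB1 := fun b => Yp A b x Phi in
    let rB2 := fun b => pdx (Yp A b) x Phi in
    let rB3 := fun b => pdy (Yp A b) x Phi in
    ex_derive rA1 A /\ ex_derive rA2 A /\ ex_derive rA3 A /\
    ex_derive rB1 B /\ ex_derive rB2 B /\ ex_derive rB3 B /\
    (forall al be : R,
       al * Derive rA1 A + be * Derive rB1 B = 0 ->
       al * Derive rA2 A + be * Derive rB2 B = 0 ->
       al * Derive rA3 A + be * Derive rB3 B = 0 ->
       al = 0 /\ be = 0)).

Definition Yfam (u1 u2 : R -> R) (A B x Phi : R) : R :=
  ctxY (fun t => A * u1 t + B * u2 t) x Phi.

(* Solutions of [u'' + h u = 0] have a constant Wronskian, and a Gronwall estimate on
   [u^2 + u'^2] shows that a solution vanishing together with its derivative at one point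
   vanishes identically.  Hence the Wronskian [W] of independent solutions never vanishes and
   [Phi^2 v^2 + v'^2 > 0] for every nonzero solution [v] and [Phi <> 0].  The pull-back of the
   hyperbolic metric and the partial differential equation for [Y] are then direct computations
   using [v'' = - h v].

   To invert [(x, Phi) |-> (X, Y)], put [a = s W (X - X0)] and [b = W Y]: then [x] is a root of
   an explicit equation [K(x, a, b) = 0] and [Phi] is a rational function of [(x, a, b)].  Since
   [dK/dx = W^2 (Phi^2 - h) / (Phi^2 v1^2 + v1'^2)] does not vanish where [Phi^2 <> h], the
   implicit function theorem yields a C^1 local inverse.

   The functions [Y], [Y_x], [Y_Phi] depend on [(A, B)] only through [(u(x), u'(x))], an
   invertible linear image of [(A, B)], and their Jacobian with respect to [(u, u')] has rank 2
   when [Phi > 0] and [Phi^2 <> h]; this is the completeness of the integral. *)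

From Stdlib Require Import Reals Lra Psatz FunctionalExtensionality ClassicalEpsilon.
From Coquelicot Require Import Coquelicot.
Open Scope R_scope.

(** * Continuity of real-valued functions *)

Section RealValuedContinuity.
Context {T : UniformSpace}.
Implicit Types (f g : T -> R) (x : T).

Lemma continuous_Rplus f g x :
  continuous f x -> continuous g x -> continuous (fun y => f y + g y) x.
Proof. exact (continuous_plus f g x). Qed.

Lemma continuous_Ropp f x : continuous f x -> continuous (fun y => - f y) x.
Proof. exact (continuous_opp f x). Qed.

Lemma continuous_Rminus f g x :
  continuous f x -> continuous g x -> continuous (fun y => f y - g y) x.
Proof. intros; apply continuous_Rplus; [| apply continuous_Ropp]; auto. Qed.

Lemma continuous_Rmult f g x :
  continuous f x -> continuous g x -> continuous (fun y => f y * g y) x.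
Proof. exact (continuous_mult f g x). Qed.

Lemma continuous_pow f n x : continuous f x -> continuous (fun y => f y ^ n) x.
Proof.
  intro Hf; induction n as [|n IH]; simpl.
  - apply continuous_const.
  - now apply continuous_Rmult.
Qed.

Lemma continuous_Rcomp f (phi : R -> R) x :
  continuous f x -> continuous phi (f x) -> continuous (fun y => phi (f y)) x.
Proof. exact (continuous_comp f phi x). Qed.

Lemma continuous_Rinv_fun f x : continuous f x -> f x <> 0 -> continuous (fun y => / f y) x.
Proof. intros Hf Hx; apply continuous_Rcomp; [exact Hf | now apply continuous_Rinv]. Qed.

Lemma continuous_Rdiv f g x :
  continuous f x -> continuous g x -> g x <> 0 -> continuous (fun y => f y / g y) x.
Proof. intros; apply continuous_Rmult; [| apply continuous_Rinv_fun]; auto. Qed.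

End RealValuedContinuity.

Lemma continuous_fst' {U V : UniformSpace} (p : U * V) : continuous (fun q => fst q) p.
Proof. destruct p; apply continuous_fst. Qed.

Lemma continuous_snd' {U V : UniformSpace} (p : U * V) : continuous (fun q => snd q) p.
Proof. destruct p; apply continuous_snd. Qed.

Lemma continuous_pair {U V W : UniformSpace} (f : U -> V) (g : U -> W) x :
  continuous f x -> continuous g x -> continuous (fun y => (f y, g y)) x.
Proof.
  intros Hf Hg; apply (continuous_comp_2 f g pair); auto.
  apply (continuous_ext (fun z => z)); [now intros [] | apply continuous_id].
Qed.

Ltac continuity_step :=
  match goal with
  | |- continuous (fun _ => ?c) _ => apply continuous_const
  | |- continuous (fun w => @?A w + @?B w) _ => apply (continuous_Rplus A B)
  | |- continuous (fun w => @?A w - @?B w) _ => apply (continuous_Rminus A B)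
  | |- continuous (fun w => @?A w * @?B w) _ => apply (continuous_Rmult A B)
  | |- continuous (fun w => @?A w / @?B w) _ => apply (continuous_Rdiv A B)
  | |- continuous (fun w => - @?A w) _ => apply (continuous_Ropp A)
  | |- continuous (fun w => / @?A w) _ => apply (continuous_Rinv_fun A)
  | |- continuous (fun w => @?A w ^ ?n) _ => apply (continuous_pow A n)
  | |- continuous (fun w => fst w) _ => apply continuous_fst'
  | |- continuous (fun w => snd w) _ => apply continuous_snd'
  | |- continuous fst _ => apply continuous_fst'
  | |- continuous snd _ => apply continuous_snd'
  | |- continuous (fun w => fst (@?A w)) _ =>
      apply (continuous_comp A (fun q => fst q)); [| apply continuous_fst']
  | |- continuous (fun w => snd (@?A w)) _ =>
      apply (continuous_comp A (fun q => snd q)); [| apply continuous_snd']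
  | |- continuous (fun w => (@?A w, @?B w)) _ => apply (continuous_pair A B)
  | |- continuous (fun w => w) _ => apply continuous_id
  | |- continuous (fun w => ?phi (@?A w)) _ => apply (continuous_Rcomp A phi)
  end.

Lemma continuity_pt_of_is_derive (f : R -> R) x l : is_derive f x l -> continuity_pt f x.
Proof.
  intro H; apply continuity_pt_filterlim.
  exact (ex_derive_continuous f x (ex_intro _ l H)).
Qed.

Lemma locally_preimage {T : UniformSpace} (F : T -> R) (O : R -> Prop) p :
  continuous F p -> open O -> O (F p) -> locally p (fun q => O (F q)).
Proof. intros C HO H; exact (C _ (HO _ H)). Qed.

Lemma locally_Rabs_lt {T : UniformSpace} (F : T -> R) c e p :
  continuous F p -> Rabs (F p - c) < e -> locally p (fun q => Rabs (F q - c) < e).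
Proof.
  intros CF H; apply (locally_preimage (fun q => Rabs (F q - c)) (fun y => y < e));
    [| apply open_lt | exact H].
  apply (continuous_Rcomp (fun q => F q - c) Rabs); [| apply continuous_Rabs].
  apply continuous_Rminus; [exact CF | apply continuous_const].
Qed.

(** * Linear second-order equations *)

Ltac eta_Derive :=
  repeat match goal with
  | |- context [Derive (fun y : R => ?f y)] => change (Derive (fun y : R => f y)) with (Derive f)
  end.

Lemma energy_zero_of_linear_bound (E dE : R -> R) (M x0 x : R) :
  (forall t, is_derive E t (dE t)) -> (forall t, 0 <= E t) ->
  (forall t, Rmin x0 x <= t <= Rmax x0 x -> Rabs (dE t) <= M * E t) ->
  E x0 = 0 -> E x = 0.
Proof.
  intros DE E_ge0 bound E0.
  set (sg := if Rle_dec x0 x then 1 else -1).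
  assert (Hsg : sg * (x - x0) = Rabs (x - x0)).
  { unfold sg; destruct (Rle_dec x0 x); [rewrite Rabs_right | rewrite Rabs_left]; lra. }
  (* [E(t) e^{-M|t - x0|}] is non-increasing away from [x0] *)
  set (wgt := fun t => exp (- sg * M * (t - x0))).
  set (dG := fun t => (dE t - sg * M * E t) * wgt t).
  assert (DG : forall t, is_derive (fun t => E t * wgt t) t (dG t)).
  { intro t; unfold wgt, dG; auto_derive; [exact (ex_intro _ _ (DE t)) |].
    eta_Derive; rewrite (is_derive_unique _ _ _ (DE t)); unfold wgt, Rminus; ring. }
  destruct (MVT_gen (fun t => E t * wgt t) x0 x dG) as [c [Hc Hmvt]].
  { intros; apply DG. }
  { intros; eapply continuity_pt_of_is_derive; apply DG. }
  assert (dE c * (x - x0) <= M * E c * Rabs (x - x0)).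
  { eapply Rle_trans; [apply Rle_abs |]; rewrite Rabs_mult.
    apply Rmult_le_compat_r; [apply Rabs_pos | now apply bound]. }
  assert (wgt_pos : forall t, 0 < wgt t) by (intro; apply exp_pos).
  assert (E x * wgt x <= 0).
  { unfold dG in Hmvt; rewrite E0, Rmult_0_l, Rminus_0_r in Hmvt; rewrite Hmvt.
    specialize (wgt_pos c); rewrite <- Hsg in *; nra. }
  specialize (wgt_pos x); specialize (E_ge0 x); nra.
Qed.

Lemma Derive_lin_comb (u1 u2 : R -> R) a b x : ex_derive u1 x -> ex_derive u2 x ->
  Derive (fun t => a * u1 t + b * u2 t) x = a * Derive u1 x + b * Derive u2 x.
Proof.
  intros D1 D2; apply is_derive_unique.
  apply (is_derive_plus (fun t => a * u1 t) (fun t => b * u2 t));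
    apply is_derive_scal, Derive_correct; assumption.
Qed.

Lemma lin_indep_lin_comb u1 u2 a b c d : lin_indep u1 u2 -> a * d - b * c <> 0 ->
  lin_indep (fun t => a * u1 t + b * u2 t) (fun t => c * u1 t + d * u2 t).
Proof.
  intros I Hdet al be E.
  destruct (I (al * a + be * c) (al * b + be * d)) as [E1 E2].
  { intro x; rewrite <- (E x); ring. }
  split; apply (Rmult_eq_reg_r (a * d - b * c)); auto.
  - replace (al * (a * d - b * c)) with (d * (al * a + be * c) - c * (al * b + be * d)) by ring.
    rewrite E1, E2; ring.
  - replace (be * (a * d - b * c)) with (a * (al * b + be * d) - b * (al * a + be * c)) by ring.
    rewrite E1, E2; ring.
Qed.

Lemma sum_sq_pos Phi p q : Phi <> 0 -> p <> 0 \/ q <> 0 -> 0 < Phi ^ 2 * p ^ 2 + q ^ 2.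
Proof.
  intros HPhi Hpq; pose proof (pow2_gt_0 Phi HPhi).
  pose proof (pow2_ge_0 p); pose proof (pow2_ge_0 q).
  destruct Hpq as [Hp | Hq]; [pose proof (pow2_gt_0 p Hp) | pose proof (pow2_gt_0 q Hq)]; nra.
Qed.

Lemma det2_eq0_kernel p1 q1 p2 q2 : q1 * p2 - p1 * q2 = 0 ->
  exists al be, ~ (al = 0 /\ be = 0) /\ al * p1 + be * p2 = 0 /\ al * q1 + be * q2 = 0.
Proof.
  intro Hdet.
  destruct (classic (p1 = 0 /\ p2 = 0)) as [[P1 P2] | NP].
  - destruct (classic (q1 = 0 /\ q2 = 0)) as [[Q1 Q2] | NQ].
    + exists 1, 0; subst; repeat split; lra.
    + exists q2, (- q1); subst; repeat split; [intros []; lra | ring | ring].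
  - exists p2, (- p1); repeat split; [intros []; lra | ring | lra].
Qed.

Lemma det2_neq0_kernel p1 q1 p2 q2 al be : q1 * p2 - p1 * q2 <> 0 ->
  al * p1 + be * p2 = 0 -> al * q1 + be * q2 = 0 -> al = 0 /\ be = 0.
Proof.
  intros Hdet E0 E1; split; apply (Rmult_eq_reg_r (q1 * p2 - p1 * q2)); auto.
  - replace (al * (q1 * p2 - p1 * q2)) with (p2 * (al * q1 + be * q2) - q2 * (al * p1 + be * p2))
      by ring; rewrite E0, E1; ring.
  - replace (be * (q1 * p2 - p1 * q2)) with (q1 * (al * p1 + be * p2) - p1 * (al * q1 + be * q2))
      by ring; rewrite E0, E1; ring.
Qed.

Section LinearSecondOrderODE.
Variable h : R -> R.

Lemma is_sol_is_derive u x : is_sol h u -> is_derive u x (Derive u x).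
Proof. intro S; apply Derive_correct, S. Qed.

Lemma is_sol_ex_derive_Derive u x : is_sol h u -> ex_derive (Derive u) x.
Proof. intro S; eexists; apply S. Qed.

Lemma is_sol_Derive_Derive u x : is_sol h u -> Derive (Derive u) x = - h x * u x.
Proof. intro S; apply is_derive_unique, S. Qed.

Lemma is_sol_continuous u x : is_sol h u -> continuous u x.
Proof. intro S; exact (ex_derive_continuous u x (proj1 (S x))). Qed.

Lemma is_sol_continuous_Derive u x : is_sol h u -> continuous (Derive u) x.
Proof. intro S; exact (ex_derive_continuous (Derive u) x (is_sol_ex_derive_Derive u x S)). Qed.

Lemma is_sol_lin_comb u1 u2 a b : is_sol h u1 -> is_sol h u2 ->
  is_sol h (fun t => a * u1 t + b * u2 t).
Proof.
  intros S1 S2 x; split.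
  - exists (a * Derive u1 x + b * Derive u2 x).
    apply (is_derive_plus (fun t => a * u1 t) (fun t => b * u2 t));
      apply is_derive_scal; now apply is_sol_is_derive.
  - apply (is_derive_ext (fun t => a * Derive u1 t + b * Derive u2 t)).
    { intro t; symmetry; apply Derive_lin_comb; [apply S1 | apply S2]. }
    replace (- h x * (a * u1 x + b * u2 x))
      with (a * (- h x * u1 x) + b * (- h x * u2 x)) by ring.
    apply (is_derive_plus (fun t => a * Derive u1 t) (fun t => b * Derive u2 t));
      apply is_derive_scal; [apply S1 | apply S2].
Qed.

Lemma wronsk_lin_comb u1 u2 a b c d x : is_sol h u1 -> is_sol h u2 ->
  wronsk (fun t => a * u1 t + b * u2 t) (fun t => c * u1 t + d * u2 t) x
  = (a * d - b * c) * wronsk u1 u2 x.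
Proof.
  intros S1 S2; unfold wronsk.
  rewrite !Derive_lin_comb by (apply S1 || apply S2); ring.
Qed.

Lemma wronsk_constant v1 v2 x y : is_sol h v1 -> is_sol h v2 ->
  wronsk v1 v2 x = wronsk v1 v2 y.
Proof.
  intros S1 S2.
  assert (D : forall t, is_derive (wronsk v1 v2) t 0).
  { intro t; unfold wronsk.
    apply (is_derive_ext (fun t => Derive v1 t * v2 t - v1 t * Derive v2 t)); [easy |].
    auto_derive.
    - repeat split; (apply S1 || apply S2 || now apply is_sol_ex_derive_Derive).
    - eta_Derive; rewrite !is_sol_Derive_Derive by assumption; ring. }
  destruct (MVT_gen (wronsk v1 v2) x y (fun _ => 0)) as [c [_ Hc]].
  - intros; apply D.
  - intros; eapply continuity_pt_of_is_derive; apply D.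
  - lra.
Qed.

Hypothesis h_cont : forall x, continuous h x.

Lemma is_sol_eq0_of_initial_zero w x0 : is_sol h w ->
  w x0 = 0 -> Derive w x0 = 0 -> forall x, w x = 0.
Proof.
  intros S W0 DW0 x.
  destruct (continuity_ab_maj (fun t => Rabs (1 - h t)) (Rmin x0 x) (Rmax x0 x))
    as [t_max [Hmax _]]; [apply Rmin_Rmax | |].
  { intros c _; apply continuity_pt_filterlim; change (continuous (fun t => Rabs (1 - h t)) c).
    repeat continuity_step; auto using continuous_Rabs. }
  (* [w^2 + w'^2] has derivative [2 w w' (1 - h)], and [|2 w w'| <= w^2 + w'^2] *)
  assert (E0 := energy_zero_of_linear_bound (fun t => w t ^ 2 + Derive w t ^ 2)
    (fun t => 2 * w t * Derive w t * (1 - h t)) (Rabs (1 - h t_max)) x0 x).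
  enough (w x ^ 2 + Derive w x ^ 2 = 0) by (pose proof (pow2_ge_0 (Derive w x)); nra).
  apply E0; clear E0; [| intro; nra | | rewrite W0, DW0; ring].
  - intro t; auto_derive; [repeat split; [apply S | eexists; apply S] |].
    eta_Derive.
    rewrite is_sol_Derive_Derive by exact S; ring.
  - intros t Ht; rewrite Rabs_mult.
    assert (Rabs (2 * w t * Derive w t) <= w t ^ 2 + Derive w t ^ 2).
    { pose proof (pow2_ge_0 (w t - Derive w t)); pose proof (pow2_ge_0 (w t + Derive w t)).
      apply Rabs_le; split; nra. }
    rewrite Rmult_comm; apply Rmult_le_compat; auto using Rabs_pos.
Qed.

Lemma is_sol_nonzero_data u x : is_sol h u -> (exists y, u y <> 0) ->
  u x <> 0 \/ Derive u x <> 0.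
Proof.
  intros S [y Hy].
  destruct (Req_dec (u x) 0) as [Z | Z]; [right | now left].
  intro Z'; now apply Hy, (is_sol_eq0_of_initial_zero u x).
Qed.

Lemma wronsk_neq0 u1 u2 x : is_sol h u1 -> is_sol h u2 -> lin_indep u1 u2 ->
  wronsk u1 u2 x <> 0.
Proof.
  intros S1 S2 I W0.
  destruct (det2_eq0_kernel (u1 x) (Derive u1 x) (u2 x) (Derive u2 x) W0)
    as [al [be [Nab [E0 E1]]]].
  apply Nab, I; intro t.
  apply (is_sol_eq0_of_initial_zero (fun t => al * u1 t + be * u2 t) x);
    [now apply is_sol_lin_comb | easy |].
  rewrite Derive_lin_comb by (apply S1 || apply S2); easy.
Qed.

End LinearSecondOrderODE.

(** * C^1 functions of two variables *)

Definition C1_at (f : R -> R -> R) (p : R * R) : Prop :=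
  locally p (fun q => ex_derive (fun t => f t (snd q)) (fst q) /\
                      ex_derive (fun s => f (fst q) s) (snd q)) /\
  continuous (fun q : R * R => f (fst q) (snd q)) p /\
  continuous (fun q : R * R => pdx f (fst q) (snd q)) p /\
  continuous (fun q : R * R => pdy f (fst q) (snd q)) p.

Lemma C1_on_of_C1_at (V : R * R -> Prop) f : (forall p, V p -> C1_at f p) -> C1_on V f.
Proof.
  intros H p Vp; destruct (H p Vp) as [L [_ [Cx Cy]]].
  apply locally_singleton in L; tauto.
Qed.

Lemma C1_at_continuous f p : C1_at f p -> continuous (fun q : R * R => f (fst q) (snd q)) p.
Proof. now intros [_ [C _]]. Qed.

Lemma C1_at_ext f g p : (forall x y, f x y = g x y) -> C1_at f p -> C1_at g p.
Proof.
  intros E; replace g with f; [easy |].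
  now apply functional_extensionality; intro x; apply functional_extensionality.
Qed.

Lemma C1_at_const c p : C1_at (fun _ _ => c) p.
Proof.
  unfold C1_at, pdx, pdy; repeat split.
  - apply filter_forall; intros; split; apply ex_derive_const.
  - apply continuous_const.
  - apply (continuous_ext (fun _ => 0)); [intro; now rewrite Derive_const | apply continuous_const].
  - apply (continuous_ext (fun _ => 0)); [intro; now rewrite Derive_const | apply continuous_const].
Qed.

Lemma C1_at_fst p : C1_at (fun x _ => x) p.
Proof.
  unfold C1_at, pdx, pdy; repeat split.
  - apply filter_forall; intros; split; [apply ex_derive_id | apply ex_derive_const].
  - apply continuous_fst'.
  - apply (continuous_ext (fun _ => 1)); [intro; now rewrite Derive_id | apply continuous_const].
  - apply (continuous_ext (fun _ => 0)); [intro; now rewrite Derive_const | apply continuous_const].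
Qed.

Lemma C1_at_snd p : C1_at (fun _ y => y) p.
Proof.
  unfold C1_at, pdx, pdy; repeat split.
  - apply filter_forall; intros; split; [apply ex_derive_const | apply ex_derive_id].
  - apply continuous_snd'.
  - apply (continuous_ext (fun _ => 0)); [intro; now rewrite Derive_const | apply continuous_const].
  - apply (continuous_ext (fun _ => 1)); [intro; now rewrite Derive_id | apply continuous_const].
Qed.

Lemma C1_at_plus f g p : C1_at f p -> C1_at g p -> C1_at (fun x y => f x y + g x y) p.
Proof.
  intros [Lf [Cf [Xf Yf]]] [Lg [Cg [Xg Yg]]].
  pose proof (filter_and _ _ Lf Lg) as L.
  split; [| split; [| split]].
  - eapply filter_imp; [| exact L]; intros q [[A B] [C D]]; split.
    + exact (ex_derive_plus (fun t => f t (snd q)) (fun t => g t (snd q)) _ A C).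
    + exact (ex_derive_plus (fun t => f (fst q) t) (fun t => g (fst q) t) _ B D).
  - now apply continuous_Rplus.
  - eapply continuous_ext_loc; [| apply (continuous_Rplus _ _ _ Xf Xg)].
    eapply filter_imp; [| exact L]; intros q [[A B] [C D]].
    symmetry; exact (Derive_plus (fun t => f t (snd q)) (fun t => g t (snd q)) _ A C).
  - eapply continuous_ext_loc; [| apply (continuous_Rplus _ _ _ Yf Yg)].
    eapply filter_imp; [| exact L]; intros q [[A B] [C D]].
    symmetry; exact (Derive_plus (fun t => f (fst q) t) (fun t => g (fst q) t) _ B D).
Qed.

Lemma C1_at_mult f g p : C1_at f p -> C1_at g p -> C1_at (fun x y => f x y * g x y) p.
Proof.
  intros [Lf [Cf [Xf Yf]]] [Lg [Cg [Xg Yg]]].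
  pose proof (filter_and _ _ Lf Lg) as L.
  split; [| split; [| split]].
  - eapply filter_imp; [| exact L]; intros q [[A B] [C D]]; split.
    + exact (ex_derive_mult (fun t => f t (snd q)) (fun t => g t (snd q)) _ A C).
    + exact (ex_derive_mult (fun t => f (fst q) t) (fun t => g (fst q) t) _ B D).
  - now apply continuous_Rmult.
  - eapply continuous_ext_loc;
      [| exact (continuous_Rplus _ _ _ (continuous_Rmult _ _ _ Xf Cg)
                                 (continuous_Rmult _ _ _ Cf Xg))].
    eapply filter_imp; [| exact L]; intros q [[A B] [C D]].
    symmetry; exact (Derive_mult (fun t => f t (snd q)) (fun t => g t (snd q)) _ A C).
  - eapply continuous_ext_loc;
      [| exact (continuous_Rplus _ _ _ (continuous_Rmult _ _ _ Yf Cg)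
                                 (continuous_Rmult _ _ _ Cf Yg))].
    eapply filter_imp; [| exact L]; intros q [[A B] [C D]].
    symmetry; exact (Derive_mult (fun t => f (fst q) t) (fun t => g (fst q) t) _ B D).
Qed.

Lemma C1_at_comp (phi dphi : R -> R) f p :
  locally (f (fst p) (snd p)) (fun y => is_derive phi y (dphi y)) ->
  continuous dphi (f (fst p) (snd p)) ->
  C1_at f p -> C1_at (fun x y => phi (f x y)) p.
Proof.
  intros Lphi Cd [Lf [Cf [Xf Yf]]].
  assert (L : locally p (fun q =>
    (ex_derive (fun t => f t (snd q)) (fst q) /\ ex_derive (fun s => f (fst q) s) (snd q)) /\
    is_derive phi (f (fst q) (snd q)) (dphi (f (fst q) (snd q))))).
  { apply filter_and; [exact Lf | exact (Cf _ Lphi)]. }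
  assert (Cdf : continuous (fun q : R * R => dphi (f (fst q) (snd q))) p)
    by now apply continuous_Rcomp.
  split; [| split; [| split]].
  - eapply filter_imp; [| exact L]; intros q [[A B] C]; split;
      [apply (ex_derive_comp phi (fun t => f t (snd q)))
      | apply (ex_derive_comp phi (fun t => f (fst q) t))]; auto; eexists; apply C.
  - apply continuous_Rcomp; [exact Cf |].
    apply locally_singleton in Lphi; apply continuity_pt_filterlim.
    eapply continuity_pt_of_is_derive; eauto.
  - eapply continuous_ext_loc; [| apply (continuous_Rmult _ _ _ Xf Cdf)].
    eapply filter_imp; [| exact L]; intros q [[A B] C].
    unfold pdx; rewrite (Derive_comp phi (fun t => f t (snd q))) by (auto; eexists; apply C).
    f_equal; symmetry; now apply is_derive_unique.
  - eapply continuous_ext_loc; [| apply (continuous_Rmult _ _ _ Yf Cdf)].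
    eapply filter_imp; [| exact L]; intros q [[A B] C].
    unfold pdy; rewrite (Derive_comp phi (fun t => f (fst q) t)) by (auto; eexists; apply C).
    f_equal; symmetry; now apply is_derive_unique.
Qed.

Lemma C1_at_opp f p : C1_at f p -> C1_at (fun x y => - f x y) p.
Proof.
  intro H; apply (C1_at_ext (fun x y => -1 * f x y)); [intros; ring |].
  apply (C1_at_mult (fun _ _ => -1)); [apply C1_at_const | exact H].
Qed.

Lemma C1_at_minus f g p : C1_at f p -> C1_at g p -> C1_at (fun x y => f x y - g x y) p.
Proof. intros; apply C1_at_plus; [| apply C1_at_opp]; assumption. Qed.

Lemma C1_at_pow f n p : C1_at f p -> C1_at (fun x y => f x y ^ n) p.
Proof.
  intro H; induction n as [| n IH]; simpl.
  - apply C1_at_const.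
  - now apply C1_at_mult.
Qed.

Lemma C1_at_inv f p : f (fst p) (snd p) <> 0 -> C1_at f p -> C1_at (fun x y => / f x y) p.
Proof.
  intros N; apply (C1_at_comp Rinv (fun y => - / y ^ 2)).
  - eapply filter_imp; [| exact (open_neq 0 _ N)]; intros y Hy.
    auto_derive; [exact Hy | field; exact Hy].
  - repeat continuity_step; now apply pow_nonzero.
Qed.

Lemma C1_at_div f g p : g (fst p) (snd p) <> 0 ->
  C1_at f p -> C1_at g p -> C1_at (fun x y => f x y / g x y) p.
Proof. intros; apply C1_at_mult; [| apply C1_at_inv]; assumption. Qed.

Lemma C1_at_sol_comp h v f p : is_sol h v -> C1_at f p -> C1_at (fun x y => v (f x y)) p.
Proof.
  intros S; apply (C1_at_comp v (Derive v)).
  - apply filter_forall; intro; now apply (is_sol_is_derive h).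
  - now apply (is_sol_continuous_Derive h).
Qed.

Lemma C1_at_sol_Derive h v p : (forall x, continuous h x) -> is_sol h v ->
  C1_at (fun x _ => Derive v x) p.
Proof.
  intros h_cont S; apply (C1_at_comp (Derive v) (fun y => - h y * v y) (fun x _ => x));
    [| | apply C1_at_fst].
  - apply filter_forall; intro; apply S.
  - apply continuous_Rmult; [apply continuous_Ropp, h_cont | now apply (is_sol_continuous h)].
Qed.

Ltac C1_step :=
  match goal with
  | |- C1_at (fun _ _ => ?c) _ => apply C1_at_const
  | |- C1_at (fun x y => @?A x y + @?B x y) _ => apply (C1_at_plus A B)
  | |- C1_at (fun x y => @?A x y - @?B x y) _ => apply (C1_at_minus A B)
  | |- C1_at (fun x y => @?A x y * @?B x y) _ => apply (C1_at_mult A B)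
  | |- C1_at (fun x y => @?A x y / @?B x y) _ => apply (C1_at_div A B)
  | |- C1_at (fun x y => / @?A x y) _ => apply (C1_at_inv A)
  | |- C1_at (fun x y => - @?A x y) _ => apply (C1_at_opp A)
  | |- C1_at (fun x y => @?A x y ^ ?n) _ => apply (C1_at_pow A n)
  | |- C1_at (fun x y => x) _ => apply C1_at_fst
  | |- C1_at (fun x y => y) _ => apply C1_at_snd
  | |- C1_at (fun x y => Derive ?v x) _ => eapply C1_at_sol_Derive
  | |- C1_at (fun x y => ?v (@?A x y)) _ => eapply (C1_at_sol_comp _ v A)
  end.

(** * An implicit function theorem *)

Lemma mvt_two_variables (k kx ka : R -> R -> R) x1 a1 x2 a2 :
  (forall x a, is_derive (fun t => k t a) x (kx x a)) ->
  (forall x a, is_derive (fun t => k x t) a (ka x a)) ->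
  exists c1 c2, Rabs (c1 - x1) <= Rabs (x2 - x1) /\ Rabs (c2 - a1) <= Rabs (a2 - a1) /\
    k x2 a2 - k x1 a1 = kx c1 a2 * (x2 - x1) + ka x1 c2 * (a2 - a1).
Proof.
  intros Dx Da.
  destruct (MVT_gen (fun t => k t a2) x1 x2 (fun t => kx t a2)) as [c1 [Hc1 E1]];
    [intros; apply Dx | intros; eapply continuity_pt_of_is_derive; apply Dx |].
  destruct (MVT_gen (fun t => k x1 t) a1 a2 (fun t => ka x1 t)) as [c2 [Hc2 E2]];
    [intros; apply Da | intros; eapply continuity_pt_of_is_derive; apply Da |].
  exists c1, c2; repeat split; [| | simpl in E1, E2; lra];
    apply Rabs_le_between_min_max; now rewrite Rmin_comm, Rmax_comm.
Qed.

Lemma implicit_is_derive (k kx ka : R -> R -> R) (g : R -> R) a1 :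
  (forall x a, is_derive (fun t => k t a) x (kx x a)) ->
  (forall x a, is_derive (fun t => k x t) a (ka x a)) ->
  continuous (fun w : R * R => kx (fst w) (snd w)) (g a1, a1) ->
  continuous (fun w : R * R => ka (fst w) (snd w)) (g a1, a1) ->
  kx (g a1) a1 <> 0 -> continuous g a1 -> locally a1 (fun a => k (g a) a = 0) ->
  is_derive g a1 (- ka (g a1) a1 / kx (g a1) a1).
Proof.
  intros Dx Da Cx Ca N0 Cg Lroot.
  assert (K1 : k (g a1) a1 = 0) by exact (locally_singleton _ _ Lroot).
  set (x1 := g a1) in *.
  (* by the mean value theorem the difference quotients of [g] are values of [Q] *)
  set (Q := fun w : R * (R * R) => ka x1 (snd (snd w)) / kx (fst w) (fst (snd w))).
  assert (Ckx : continuous (fun w : R * (R * R) => kx (fst w) (fst (snd w))) (x1, (a1, a1))).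
  { apply (continuous_comp (fun w : R * (R * R) => (fst w, fst (snd w)))
      (fun w => kx (fst w) (snd w))); [repeat continuity_step | exact Cx]. }
  assert (CQ : continuous Q (x1, (a1, a1))).
  { apply continuous_Rdiv; [| exact Ckx | exact N0].
    apply (continuous_comp (fun w : R * (R * R) => (x1, snd (snd w)))
      (fun w => ka (fst w) (snd w))); [repeat continuity_step | exact Ca]. }
  apply is_derive_Reals; intros eps Heps.
  assert (Lw : locally (x1, (a1, a1)) (fun w =>
    ball (Q (x1, (a1, a1))) eps (Q w) /\ kx (fst w) (fst (snd w)) <> 0)).
  { apply filter_and; [exact (CQ _ (locally_ball _ (mkposreal eps Heps))) |].
    exact (Ckx (fun y => y <> 0) (open_neq 0 _ N0)). }
  destruct Lw as [t Ht].
  assert (La : locally a1 (fun a => ball x1 t (g a) /\ ball a1 t a /\ k (g a) a = 0)).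
  { repeat apply filter_and;
      [exact (Cg _ (locally_ball x1 t)) | apply locally_ball | exact Lroot]. }
  destruct La as [d Hd].
  exists d; intros dh Hdh0 Hdh.
  destruct (Hd (a1 + dh)) as [Hg [Ha Hk]].
  { change (Rabs (a1 + dh - a1) < d); now replace (a1 + dh - a1) with dh by ring. }
  destruct (mvt_two_variables k kx ka x1 a1 (g (a1 + dh)) (a1 + dh) Dx Da)
    as [c1 [c2 [H1 [H2 E]]]].
  change (Rabs (g (a1 + dh) - x1) < t) in Hg; change (Rabs (a1 + dh - a1) < t) in Ha.
  destruct (Ht (c1, (a1 + dh, c2))) as [HQ NZ].
  { repeat split; [change (Rabs (c1 - x1) < t) | change (Rabs (a1 + dh - a1) < t)
      | change (Rabs (c2 - a1) < t)]; lra. }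
  change (Rabs (Q (c1, (a1 + dh, c2)) - Q (x1, (a1, a1))) < eps) in HQ.
  unfold Q in HQ; simpl in HQ, NZ.
  rewrite Hk, K1 in E; replace (a1 + dh - a1) with dh in E by ring.
  change (g a1) with x1.
  replace ((g (a1 + dh) - x1) / dh - - ka x1 a1 / kx x1 a1)
    with (- (ka x1 c2 / kx c1 (a1 + dh) - ka x1 a1 / kx x1 a1)); [now rewrite Rabs_Ropp |].
  replace (g (a1 + dh) - x1) with (- (ka x1 c2 * dh) / kx c1 (a1 + dh)); [field; tauto |].
  apply (Rmult_eq_reg_l (kx c1 (a1 + dh))); [field_simplify; lra | exact NZ].
Qed.

Definition continuous3 (F : R -> R -> R -> R) : Prop := forall x a b,
  continuous (fun w : R * (R * R) => F (fst w) (fst (snd w)) (snd (snd w))) (x, (a, b)).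

Lemma continuous3_comp {T : UniformSpace} F (u v w : T -> R) p : continuous3 F ->
  continuous u p -> continuous v p -> continuous w p ->
  continuous (fun q => F (u q) (v q) (w q)) p.
Proof.
  intros CF Cu Cv Cw.
  apply (continuous_comp (fun q => (u q, (v q, w q)))
    (fun z => F (fst z) (fst (snd z)) (snd (snd z)))); [| apply CF].
  apply continuous_pair; [exact Cu | now apply continuous_pair].
Qed.

Definition implicit_function_on (K : R -> R -> R -> R) (x0 a0 b0 d e : R) (g : R -> R -> R) :=
  (forall a b, Rabs (a - a0) < e -> Rabs (b - b0) < e ->
     Rabs (g a b - x0) < d /\ K (g a b) a b = 0) /\
  (forall a b x, Rabs (a - a0) < e -> Rabs (b - b0) < e -> Rabs (x - x0) < d ->
     K x a b = 0 -> x = g a b) /\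
  (forall a b, Rabs (a - a0) < e -> Rabs (b - b0) < e -> C1_at g (a, b)).

Section ImplicitFunction.
Variables K Kx Ka Kb : R -> R -> R -> R.
Hypothesis K_dx : forall x a b, is_derive (fun t => K t a b) x (Kx x a b).
Hypothesis K_da : forall x a b, is_derive (fun t => K x t b) a (Ka x a b).
Hypothesis K_db : forall x a b, is_derive (fun t => K x a t) b (Kb x a b).
Hypotheses (K_cont : continuous3 K) (Kx_cont : continuous3 Kx)
  (Ka_cont : continuous3 Ka) (Kb_cont : continuous3 Kb).

Section PositiveDerivative.
Variables x0 a0 b0 rho : R.
Hypothesis rho_pos : 0 < rho.
Hypothesis Kx_pos : forall x a b,
  Rabs (x - x0) < rho -> Rabs (a - a0) < rho -> Rabs (b - b0) < rho -> 0 < Kx x a b.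

Lemma K_increasing a b x y : Rabs (a - a0) < rho -> Rabs (b - b0) < rho ->
  Rabs (x - x0) < rho -> Rabs (y - x0) < rho -> x < y -> K x a b < K y a b.
Proof.
  intros Ha Hb Hx Hy Hxy.
  destruct (MVT_gen (fun t => K t a b) x y (fun t => Kx t a b)) as [c [Hc E]];
    [intros; apply K_dx | intros; eapply continuity_pt_of_is_derive; apply K_dx |].
  rewrite Rmin_left, Rmax_right in Hc by lra.
  assert (0 < Kx c a b).
  { apply Kx_pos; auto.
    apply Rabs_def2 in Hx; apply Rabs_def2 in Hy; apply Rabs_def1; lra. }
  simpl in E; nra.
Qed.

Lemma K_root_unique a b x y : Rabs (a - a0) < rho -> Rabs (b - b0) < rho ->
  Rabs (x - x0) < rho -> Rabs (y - x0) < rho -> K x a b = 0 -> K y a b = 0 -> x = y.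
Proof.
  intros Ha Hb Hx Hy Kx0 Ky0.
  destruct (Rtotal_order x y) as [H | [H | H]]; [| easy |];
    [pose proof (K_increasing a b x y Ha Hb Hx Hy H)
    | pose proof (K_increasing a b y x Ha Hb Hy Hx H)]; lra.
Qed.

Lemma K_root_near a1 b1 x1 e : Rabs (a1 - a0) < rho -> Rabs (b1 - b0) < rho ->
  Rabs (x1 - x0) + e < rho -> 0 < e -> K x1 a1 b1 = 0 ->
  locally (a1, b1) (fun q => exists x, Rabs (x - x1) < e /\ K x (fst q) (snd q) = 0).
Proof.
  intros Ha Hb Hx He R1.
  assert (Bx : x1 - x0 < rho - e /\ - (rho - e) < x1 - x0) by (apply Rabs_def2; lra).
  assert (Kp : 0 < K (x1 + e / 2) a1 b1).
  { rewrite <- R1; apply K_increasing; auto; try apply Rabs_def1; lra. }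
  assert (Kn : K (x1 - e / 2) a1 b1 < 0).
  { rewrite <- R1; apply K_increasing; auto; try apply Rabs_def1; lra. }
  assert (Lp := locally_preimage (fun q : R * R => K (x1 + e / 2) (fst q) (snd q))
    (fun y => 0 < y) (a1, b1) ltac:(apply continuous3_comp; [easy | repeat continuity_step ..])
    (open_gt 0) Kp).
  assert (Ln := locally_preimage (fun q : R * R => K (x1 - e / 2) (fst q) (snd q))
    (fun y => y < 0) (a1, b1) ltac:(apply continuous3_comp; [easy | repeat continuity_step ..])
    (open_lt 0) Kn).
  eapply filter_imp; [| exact (filter_and _ _ Lp Ln)]; intros [a b] [Pa Nb]; simpl in *.
  destruct (IVT (fun t => K t a b) (x1 - e / 2) (x1 + e / 2)) as [z [Hz Kz]];
    [intro t; eapply continuity_pt_of_is_derive; apply K_dx | lra | exact Nb | exact Pa |].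
  exists z; split; [apply Rabs_def1; lra | exact Kz].
Qed.

Definition implicit_root (a b : R) : R :=
  epsilon (inhabits 0) (fun x => Rabs (x - x0) < rho / 2 /\ K x a b = 0).

Section RootsOnBox.
Variable e : R.
Hypothesis e_le_rho : e <= rho.
Hypothesis e_roots : forall a b, Rabs (a - a0) < e -> Rabs (b - b0) < e ->
  exists x, Rabs (x - x0) < rho / 2 /\ K x a b = 0.

Let g := implicit_root.

Lemma implicit_root_spec a b : Rabs (a - a0) < e -> Rabs (b - b0) < e ->
  Rabs (g a b - x0) < rho / 2 /\ K (g a b) a b = 0.
Proof. intros Ha Hb; unfold g, implicit_root; apply epsilon_spec, e_roots; assumption. Qed.

Lemma implicit_root_unique a b x : Rabs (a - a0) < e -> Rabs (b - b0) < e ->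
  Rabs (x - x0) < rho / 2 -> K x a b = 0 -> x = g a b.
Proof.
  intros Ha Hb Hx Kx0; destruct (implicit_root_spec a b Ha Hb) as [Hg Kg].
  apply (K_root_unique a b); lra.
Qed.

Lemma Kx_implicit_root_pos a b : Rabs (a - a0) < e -> Rabs (b - b0) < e ->
  0 < Kx (g a b) a b.
Proof. intros Ha Hb; destruct (implicit_root_spec a b Ha Hb); apply Kx_pos; lra. Qed.

Lemma locally_box a1 b1 : Rabs (a1 - a0) < e -> Rabs (b1 - b0) < e ->
  locally (a1, b1) (fun q => Rabs (fst q - a0) < e /\ Rabs (snd q - b0) < e).
Proof.
  intros Ha Hb; apply filter_and; apply locally_Rabs_lt; auto; repeat continuity_step.
Qed.

Lemma implicit_root_continuous a1 b1 : Rabs (a1 - a0) < e -> Rabs (b1 - b0) < e ->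
  continuous (fun q : R * R => g (fst q) (snd q)) (a1, b1).
Proof.
  intros Ha Hb; destruct (implicit_root_spec a1 b1 Ha Hb) as [Hg Kg].
  set (x1 := g a1 b1) in *.
  apply filterlim_locally; intro eps.
  set (ee := Rmin eps (rho / 2 - Rabs (x1 - x0))).
  assert (ee <= eps) by apply Rmin_l.
  assert (ee <= rho / 2 - Rabs (x1 - x0)) by apply Rmin_r.
  assert (0 < ee) by (apply Rmin_pos; [apply cond_pos | lra]).
  assert (Lroot := K_root_near a1 b1 x1 ee ltac:(lra) ltac:(lra) ltac:(lra) ltac:(lra) Kg).
  eapply filter_imp; [| exact (filter_and _ _ (locally_box a1 b1 Ha Hb) Lroot)].
  intros [a b] [[Ha' Hb'] [x [Hx Kx0]]]; simpl in *.
  pose proof (Rabs_triang (x - x1) (x1 - x0)).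
  replace (x - x1 + (x1 - x0)) with (x - x0) in * by ring.
  rewrite <- (implicit_root_unique a b x Ha' Hb'); [| lra | exact Kx0].
  change (Rabs (x - x1) < eps); lra.
Qed.

Lemma implicit_root_is_derive_a a1 b1 : Rabs (a1 - a0) < e -> Rabs (b1 - b0) < e ->
  is_derive (fun t => g t b1) a1 (- Ka (g a1 b1) a1 b1 / Kx (g a1 b1) a1 b1).
Proof.
  intros Ha Hb.
  apply (implicit_is_derive (fun x a => K x a b1) (fun x a => Kx x a b1) (fun x a => Ka x a b1)
    (fun t => g t b1) a1).
  - intros; apply K_dx.
  - intros; apply K_da.
  - apply continuous3_comp; [easy | repeat continuity_step ..].
  - apply continuous3_comp; [easy | repeat continuity_step ..].
  - now apply Rgt_not_eq, Kx_implicit_root_pos.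
  - apply (continuous_comp (fun t => (t, b1)) (fun q : R * R => g (fst q) (snd q)));
      [repeat continuity_step | now apply implicit_root_continuous].
  - eapply filter_imp; [intros a Ha'; exact (proj2 (implicit_root_spec a b1 Ha' Hb)) |].
    apply locally_Rabs_lt; [apply continuous_id | exact Ha].
Qed.

Lemma implicit_root_is_derive_b a1 b1 : Rabs (a1 - a0) < e -> Rabs (b1 - b0) < e ->
  is_derive (fun t => g a1 t) b1 (- Kb (g a1 b1) a1 b1 / Kx (g a1 b1) a1 b1).
Proof.
  intros Ha Hb.
  apply (implicit_is_derive (fun x b => K x a1 b) (fun x b => Kx x a1 b) (fun x b => Kb x a1 b)
    (fun t => g a1 t) b1).
  - intros; apply K_dx.
  - intros; apply K_db.
  - apply continuous3_comp; [easy | repeat continuity_step ..].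
  - apply continuous3_comp; [easy | repeat continuity_step ..].
  - now apply Rgt_not_eq, Kx_implicit_root_pos.
  - apply (continuous_comp (fun t => (a1, t)) (fun q : R * R => g (fst q) (snd q)));
      [repeat continuity_step | now apply implicit_root_continuous].
  - eapply filter_imp; [intros b Hb'; exact (proj2 (implicit_root_spec a1 b Ha Hb')) |].
    apply locally_Rabs_lt; [apply continuous_id | exact Hb].
Qed.

Lemma implicit_root_C1 a1 b1 : Rabs (a1 - a0) < e -> Rabs (b1 - b0) < e -> C1_at g (a1, b1).
Proof.
  intros Ha Hb.
  assert (Lbox := locally_box a1 b1 Ha Hb).
  assert (Cg := implicit_root_continuous a1 b1 Ha Hb).
  assert (Cquot : forall Kd, continuous3 Kd -> continuous (fun q : R * R =>
      - Kd (g (fst q) (snd q)) (fst q) (snd q) / Kx (g (fst q) (snd q)) (fst q) (snd q)) (a1, b1)).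
  { intros Kd CKd.
    apply continuous_Rdiv; [apply continuous_Ropp | | now apply Rgt_not_eq, Kx_implicit_root_pos];
      apply continuous3_comp; auto; repeat continuity_step. }
  split; [| split; [exact Cg | split]].
  - eapply filter_imp; [| exact Lbox]; intros [a b] [H1 H2]; simpl in *.
    split; eexists; [apply implicit_root_is_derive_a | apply implicit_root_is_derive_b]; auto.
  - eapply continuous_ext_loc; [| exact (Cquot Ka Ka_cont)].
    eapply filter_imp; [| exact Lbox]; intros [a b] [H1 H2]; simpl in *.
    symmetry; apply is_derive_unique, implicit_root_is_derive_a; auto.
  - eapply continuous_ext_loc; [| exact (Cquot Kb Kb_cont)].
    eapply filter_imp; [| exact Lbox]; intros [a b] [H1 H2]; simpl in *.
    symmetry; apply is_derive_unique, implicit_root_is_derive_b; auto.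
Qed.

End RootsOnBox.
End PositiveDerivative.

Lemma implicit_function_pos x0 a0 b0 : K x0 a0 b0 = 0 -> 0 < Kx x0 a0 b0 ->
  exists d e (g : R -> R -> R), 0 < d /\ 0 < e /\ implicit_function_on K x0 a0 b0 d e g.
Proof.
  intros K0 Kx0.
  destruct (Kx_cont x0 a0 b0 _ (open_gt 0 _ Kx0)) as [rho Hrho].
  assert (Kx_pos : forall x a b, Rabs (x - x0) < rho -> Rabs (a - a0) < rho ->
    Rabs (b - b0) < rho -> 0 < Kx x a b).
  { intros x a b Hx Ha Hb; exact (Hrho (x, (a, b)) (conj Hx (conj Ha Hb))). }
  assert (rho_pos := cond_pos rho).
  destruct (K_root_near x0 a0 b0 rho Kx_pos a0 b0 x0 (rho / 2)) as [eps Heps];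
    rewrite ?Rminus_eq_0, ?Rabs_R0; try lra.
  set (e := Rmin eps rho).
  assert (e_le_eps : e <= eps) by apply Rmin_l.
  assert (e_le_rho : e <= rho) by apply Rmin_r.
  assert (e_roots : forall a b, Rabs (a - a0) < e -> Rabs (b - b0) < e ->
    exists x, Rabs (x - x0) < rho / 2 /\ K x a b = 0).
  { intros a b Ha Hb; destruct (Heps (a, b)) as [x Hx]; [| now exists x].
    split; [change (Rabs (a - a0) < eps) | change (Rabs (b - b0) < eps)]; lra. }
  exists (rho / 2), e, (implicit_root x0 rho).
  split; [lra | split; [apply Rmin_pos; [apply cond_pos | exact rho_pos] | split]].
  - intros; now apply (implicit_root_spec x0 a0 b0 rho e).
  - split; intros.
    + now apply (implicit_root_unique x0 a0 b0 rho rho_pos Kx_pos e).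
    + now apply (implicit_root_C1 x0 a0 b0 rho rho_pos Kx_pos e).
Qed.

End ImplicitFunction.

Lemma implicit_function (K Kx Ka Kb : R -> R -> R -> R) x0 a0 b0 :
  (forall x a b, is_derive (fun t => K t a b) x (Kx x a b)) ->
  (forall x a b, is_derive (fun t => K x t b) a (Ka x a b)) ->
  (forall x a b, is_derive (fun t => K x a t) b (Kb x a b)) ->
  continuous3 K -> continuous3 Kx -> continuous3 Ka -> continuous3 Kb ->
  K x0 a0 b0 = 0 -> Kx x0 a0 b0 <> 0 ->
  exists d e (g : R -> R -> R), 0 < d /\ 0 < e /\ implicit_function_on K x0 a0 b0 d e g.
Proof.
  intros Dx Da Db CK CKx CKa CKb K0 N.
  destruct (Rlt_dec 0 (Kx x0 a0 b0)) as [P | P]; [now apply (implicit_function_pos K Kx Ka Kb) |].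
  assert (Copp : forall F, continuous3 F -> continuous3 (fun x a b => - F x a b))
    by (intros F CF x a b; apply continuous_Ropp, CF).
  destruct (implicit_function_pos (fun x a b => - K x a b) (fun x a b => - Kx x a b)
    (fun x a b => - Ka x a b) (fun x a b => - Kb x a b)) with x0 a0 b0
    as [d [e [g [Hd [He [G1 [G2 G3]]]]]]]; auto; try lra.
  - intros; apply (is_derive_opp (fun t => K t a b)), Dx.
  - intros; apply (is_derive_opp (fun t => K x t b)), Da.
  - intros; apply (is_derive_opp (fun t => K x a t)), Db.
  - exists d, e, g; split; [easy | split; [easy | split; [| split; [| exact G3]]]].
    + intros a b Ha Hb; destruct (G1 a b Ha Hb); split; [easy | lra].
    + intros; apply G2; auto; lra.
Qed.

(** * The map (x, Phi) |-> (X, Y) *)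

Definition ctx_den (v : R -> R) (x Phi : R) : R := Phi ^ 2 * v x ^ 2 + Derive v x ^ 2.

Lemma ctx_den_pos_of_wronsk v1 v2 x Phi : wronsk v1 v2 x <> 0 -> Phi <> 0 -> 0 < ctx_den v1 x Phi.
Proof.
  intros Wx HPhi; apply sum_sq_pos; [exact HPhi |].
  destruct (Req_dec (v1 x) 0) as [Z | Z]; [right | now left].
  intro Z'; apply Wx; unfold wronsk; rewrite Z, Z'; ring.
Qed.

Section ContextMapDerivatives.
Variable h : R -> R.

Lemma ctxY_dx v x Phi : is_sol h v -> ctx_den v x Phi <> 0 ->
  is_derive (fun t => ctxY v t Phi) x
    (- 2 * Phi * v x * Derive v x * (Phi ^ 2 - h x) / ctx_den v x Phi ^ 2).
Proof.
  unfold ctx_den; intros S N; unfold ctxY; auto_derive.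
  - repeat split; [apply S | now apply (is_sol_ex_derive_Derive h) | exact N].
  - eta_Derive; rewrite (is_sol_Derive_Derive h) by exact S; field; now rewrite Rpow_mult_distr.
Qed.

Lemma ctxY_dPhi v x Phi : ctx_den v x Phi <> 0 ->
  is_derive (fun P => ctxY v x P) Phi
    ((Derive v x ^ 2 - Phi ^ 2 * v x ^ 2) / ctx_den v x Phi ^ 2).
Proof.
  unfold ctx_den; intro N; unfold ctxY; auto_derive; [exact N |].
  field; now rewrite Rpow_mult_distr.
Qed.

Lemma ctxX_dx v1 v2 X0 s Wc x Phi : is_sol h v1 -> is_sol h v2 ->
  (forall y, wronsk v1 v2 y = Wc) -> Wc <> 0 -> ctx_den v1 x Phi <> 0 ->
  is_derive (fun t => ctxX v1 v2 X0 s t Phi) x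
    (s * (Phi ^ 2 - h x) * (Derive v1 x ^ 2 - Phi ^ 2 * v1 x ^ 2) / ctx_den v1 x Phi ^ 2).
Proof.
  unfold ctx_den; intros S1 S2 HW Wn N; unfold ctxX.
  apply (is_derive_ext (fun t => X0 + s * / Wc *
    ((Phi ^ 2 * v1 t * v2 t + Derive v1 t * Derive v2 t) /
     (Phi ^ 2 * v1 t ^ 2 + Derive v1 t ^ 2))));
    [intro t; now rewrite HW |].
  auto_derive.
  - repeat split; auto; (apply S1 || apply S2 || now apply (is_sol_ex_derive_Derive h)).
  - eta_Derive; rewrite !(is_sol_Derive_Derive h) by assumption.
    rewrite <- (HW x) in Wn |- *; unfold wronsk in *; field; rewrite Rpow_mult_distr; tauto.
Qed.

Lemma ctxX_dPhi v1 v2 X0 s x Phi : wronsk v1 v2 x <> 0 -> ctx_den v1 x Phi <> 0 ->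
  is_derive (fun P => ctxX v1 v2 X0 s x P) Phi
    (2 * Phi * v1 x * Derive v1 x * s / ctx_den v1 x Phi ^ 2).
Proof.
  unfold ctx_den; intros Wn N; unfold ctxX; auto_derive; [tauto |].
  unfold wronsk in *; field; rewrite Rpow_mult_distr; tauto.
Qed.

Lemma pullback_gH_ctx v1 v2 X0 s Wc : is_sol h v1 -> is_sol h v2 ->
  (forall y, wronsk v1 v2 y = Wc) -> Wc <> 0 -> (s = 1 \/ s = -1) ->
  pullback_gH_is_gh h (Dom h) (ctxX v1 v2 X0 s) (ctxY v1).
Proof.
  intros S1 S2 HW Wn Hs x Phi [HPhi _].
  assert (Wx : wronsk v1 v2 x <> 0) by now rewrite HW.
  assert (Dp := ctx_den_pos_of_wronsk v1 v2 x Phi Wx ltac:(lra)).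
  assert (N : ctx_den v1 x Phi <> 0) by lra.
  assert (E1 : pdx (ctxX v1 v2 X0 s) x Phi = s * (Phi ^ 2 - h x) *
    (Derive v1 x ^ 2 - Phi ^ 2 * v1 x ^ 2) / ctx_den v1 x Phi ^ 2)
    by now apply is_derive_unique, ctxX_dx with Wc.
  assert (E2 : pdy (ctxX v1 v2 X0 s) x Phi =
    2 * Phi * v1 x * Derive v1 x * s / ctx_den v1 x Phi ^ 2)
    by now apply is_derive_unique, ctxX_dPhi.
  assert (E3 : pdx (ctxY v1) x Phi =
    - 2 * Phi * v1 x * Derive v1 x * (Phi ^ 2 - h x) / ctx_den v1 x Phi ^ 2)
    by now apply is_derive_unique, ctxY_dx.
  assert (E4 : pdy (ctxY v1) x Phi =
    (Derive v1 x ^ 2 - Phi ^ 2 * v1 x ^ 2) / ctx_den v1 x Phi ^ 2)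
    by now apply is_derive_unique, ctxY_dPhi.
  rewrite E1, E2, E3, E4.
  unfold ctxY; fold (ctx_den v1 x Phi).
  split; [now apply Rdiv_lt_0_compat |].
  unfold ctx_den in *; destruct Hs; subst s; repeat split; field; rewrite ?Rpow_mult_distr; lra.
Qed.

End ContextMapDerivatives.

Definition inversion_eq (v1 v2 : R -> R) (x a b : R) : R :=
  (a * v1 x - v2 x) * (a * Derive v1 x - Derive v2 x) + b ^ 2 * v1 x * Derive v1 x.

Section InversionAlgebra.
Variables p q r t Phi : R.
Let W := q * r - p * t.
Let D := Phi ^ 2 * p ^ 2 + q ^ 2.
Hypothesis D_neq0 : D <> 0.

(* [a - i b = (Phi r + i t) / (Phi p + i q)]; eliminating [Phi] between the real and
   imaginary parts of [(a - i b) (Phi p + i q) = Phi r + i t] gives [inversion_eq]. *)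
Let a := (Phi ^ 2 * p * r + q * t) / D.
Let b := W * Phi / D.

Lemma inversion_eq_image : (a * p - r) * (a * q - t) + b ^ 2 * p * q = 0.
Proof. unfold a, b, W, D in *; field; now rewrite Rpow_mult_distr. Qed.

Lemma inversion_eq_dx_image hx :
  (a * q - t) ^ 2 - hx * (a * p - r) ^ 2 + b ^ 2 * (q ^ 2 - hx * p ^ 2)
  = W ^ 2 * (Phi ^ 2 - hx) / D.
Proof. unfold a, b, W, D in *; field; now rewrite Rpow_mult_distr. Qed.

Lemma Phi_of_image : W <> 0 -> b * W / (b ^ 2 * p ^ 2 + (a * p - r) ^ 2) = Phi.
Proof.
  intro Wn.
  replace (b ^ 2 * p ^ 2 + (a * p - r) ^ 2) with (W ^ 2 / D)
    by (unfold a, b, W, D in *; field; now rewrite Rpow_mult_distr).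
  unfold b; field; tauto.
Qed.

End InversionAlgebra.

Lemma image_of_inversion_root p q r t a b :
  let W := q * r - p * t in
  let Phi := b * W / (b ^ 2 * p ^ 2 + (a * p - r) ^ 2) in
  (a * p - r) * (a * q - t) + b ^ 2 * p * q = 0 ->
  b ^ 2 * p ^ 2 + (a * p - r) ^ 2 <> 0 -> Phi ^ 2 * p ^ 2 + q ^ 2 <> 0 ->
  a = (Phi ^ 2 * p * r + q * t) / (Phi ^ 2 * p ^ 2 + q ^ 2) /\
  b = W * Phi / (Phi ^ 2 * p ^ 2 + q ^ 2).
Proof.
  intros W Phi K0 N D0.
  set (dd := b ^ 2 * p ^ 2 + (a * p - r) ^ 2) in *.
  assert (E1 : a * q - t - b * Phi * p = 0).
  { apply (Rmult_eq_reg_r dd); [| exact N]; rewrite Rmult_0_l.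
    transitivity ((a * p - r) * ((a * p - r) * (a * q - t) + b ^ 2 * p * q));
      [unfold Phi, W, dd in *; field; now rewrite Rpow_mult_distr | rewrite K0; ring]. }
  assert (E2 : a * Phi * p - Phi * r + b * q = 0).
  { apply (Rmult_eq_reg_r dd); [| exact N]; rewrite Rmult_0_l.
    transitivity (b * p * ((a * p - r) * (a * q - t) + b ^ 2 * p * q));
      [unfold Phi, W, dd in *; field; now rewrite Rpow_mult_distr | rewrite K0; ring]. }
  assert (N1 : a * (Phi ^ 2 * p ^ 2 + q ^ 2) = Phi ^ 2 * p * r + q * t).
  { assert (Phi ^ 2 * p * r + q * t - a * (Phi ^ 2 * p ^ 2 + q ^ 2) =
      - Phi * p * (a * Phi * p - Phi * r + b * q) - q * (a * q - t - b * Phi * p)) by ring.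
    rewrite E1, E2 in *; lra. }
  assert (N2 : b * (Phi ^ 2 * p ^ 2 + q ^ 2) = W * Phi).
  { assert (W * Phi - b * (Phi ^ 2 * p ^ 2 + q ^ 2) =
      Phi * p * (a * q - t - b * Phi * p) - q * (a * Phi * p - Phi * r + b * q))
      by (unfold W; ring).
    rewrite E1, E2 in *; lra. }
  split; [rewrite <- N1 | rewrite <- N2]; field; now rewrite Rpow_mult_distr.
Qed.

Section LocalInverse.
Variables (h v1 v2 : R -> R) (X0 s Wc : R).
Hypotheses (h_cont : forall x, continuous h x) (S1 : is_sol h v1) (S2 : is_sol h v2).
Hypotheses (HW : forall x, wronsk v1 v2 x = Wc) (Wc_neq0 : Wc <> 0) (Hs : s = 1 \/ s = -1).

Let a (X : R) := s * Wc * (X - X0).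
Let b (Y : R) := Wc * Y.
Let K (x X Y : R) := inversion_eq v1 v2 x (a X) (b Y).
Let Kx (x X Y : R) := (a X * Derive v1 x - Derive v2 x) ^ 2 - h x * (a X * v1 x - v2 x) ^ 2
  + b Y ^ 2 * (Derive v1 x ^ 2 - h x * v1 x ^ 2).
Let KX (x X Y : R) :=
  s * Wc * (v1 x * (a X * Derive v1 x - Derive v2 x) + (a X * v1 x - v2 x) * Derive v1 x).
Let KY (x X Y : R) := Wc * (2 * b Y * v1 x * Derive v1 x).
Let Phi_of (x X Y : R) := b Y * Wc / (b Y ^ 2 * v1 x ^ 2 + (a X * v1 x - v2 x) ^ 2).

Lemma ctx_den_pos x Phi : Phi <> 0 -> 0 < ctx_den v1 x Phi.
Proof. apply (ctx_den_pos_of_wronsk v1 v2); now rewrite HW. Qed.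

Lemma a_ctxX x Phi : Phi <> 0 -> a (ctxX v1 v2 X0 s x Phi) =
  (Phi ^ 2 * v1 x * v2 x + Derive v1 x * Derive v2 x) / ctx_den v1 x Phi.
Proof.
  intro HPhi; pose proof (ctx_den_pos x Phi HPhi); unfold a, ctxX, ctx_den in *; rewrite HW.
  destruct Hs; subst s; field; lra.
Qed.

Lemma b_ctxY x Phi : Phi <> 0 -> b (ctxY v1 x Phi) =
  (Derive v1 x * v2 x - v1 x * Derive v2 x) * Phi / ctx_den v1 x Phi.
Proof.
  intro HPhi; pose proof (ctx_den_pos x Phi HPhi); unfold b, ctxY, ctx_den in *.
  rewrite <- (HW x); unfold wronsk; field; lra.
Qed.

Lemma K_ctx x Phi : Phi <> 0 -> K x (ctxX v1 v2 X0 s x Phi) (ctxY v1 x Phi) = 0.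
Proof.
  intro HPhi; pose proof (ctx_den_pos x Phi HPhi).
  unfold K, inversion_eq; rewrite a_ctxX, b_ctxY by exact HPhi.
  apply inversion_eq_image; unfold ctx_den in *; lra.
Qed.

Lemma Kx_ctx_neq0 x Phi : Dom h x Phi -> Kx x (ctxX v1 v2 X0 s x Phi) (ctxY v1 x Phi) <> 0.
Proof.
  intros [HPhi Hh]; pose proof (ctx_den_pos x Phi ltac:(lra)).
  unfold Kx; rewrite a_ctxX, b_ctxY by lra.
  rewrite inversion_eq_dx_image by (unfold ctx_den in *; lra).
  assert (W2 : 0 < (Derive v1 x * v2 x - v1 x * Derive v2 x) ^ 2).
  { apply pow2_gt_0; fold (wronsk v1 v2 x); now rewrite HW. }
  unfold Rdiv; apply Rmult_integral_contrapositive_currified;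
    [apply Rmult_integral_contrapositive_currified; lra |].
  apply Rinv_neq_0_compat; unfold ctx_den in *; lra.
Qed.

Lemma Phi_of_ctx x Phi : Phi <> 0 -> Phi_of x (ctxX v1 v2 X0 s x Phi) (ctxY v1 x Phi) = Phi.
Proof.
  intro HPhi; pose proof (ctx_den_pos x Phi HPhi).
  unfold Phi_of; rewrite a_ctxX, b_ctxY by exact HPhi.
  rewrite <- (HW x) at 1; unfold wronsk.
  apply Phi_of_image; [unfold ctx_den in *; lra |].
  fold (wronsk v1 v2 x); now rewrite HW.
Qed.

Lemma ctx_Phi_of x X Y : K x X Y = 0 -> 0 < Phi_of x X Y ->
  ctxX v1 v2 X0 s x (Phi_of x X Y) = X /\ ctxY v1 x (Phi_of x X Y) = Y.
Proof.
  intros K0 Hpos.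
  assert (dd_neq0 : b Y ^ 2 * v1 x ^ 2 + (a X * v1 x - v2 x) ^ 2 <> 0).
  { intro Z; unfold Phi_of in Hpos; rewrite Z, Rdiv_0_r in Hpos; lra. }
  set (Phi := Phi_of x X Y) in *.
  assert (D_pos := ctx_den_pos x Phi ltac:(lra)); unfold ctx_den in D_pos.
  assert (EPhi : Phi = b Y * (Derive v1 x * v2 x - v1 x * Derive v2 x) /
    (b Y ^ 2 * v1 x ^ 2 + (a X * v1 x - v2 x) ^ 2)) by (unfold Phi, Phi_of; now rewrite <- (HW x)).
  destruct (image_of_inversion_root (v1 x) (Derive v1 x) (v2 x) (Derive v2 x) (a X) (b Y)
    K0 dd_neq0) as [Ea Eb]; rewrite <- EPhi in *; [lra |].
  fold (wronsk v1 v2 x) in Eb; rewrite HW in Eb.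
  split.
  - unfold ctxX; rewrite HW, <- Ea; unfold a; destruct Hs; subst s; field; exact Wc_neq0.
  - apply (Rmult_eq_reg_l Wc); [| exact Wc_neq0].
    unfold ctxY; change (Wc * Y) with (b Y); rewrite Eb; field; lra.
Qed.

Lemma K_dx x X Y : is_derive (fun t => K t X Y) x (Kx x X Y).
Proof.
  unfold K, Kx, inversion_eq; auto_derive.
  - repeat split; (apply S1 || apply S2 || now apply (is_sol_ex_derive_Derive h)).
  - eta_Derive; rewrite !(is_sol_Derive_Derive h) by assumption; ring.
Qed.

Lemma K_dX x X Y : is_derive (fun t => K x t Y) X (KX x X Y).
Proof. unfold K, KX, inversion_eq, a; auto_derive; [easy | ring]. Qed.

Lemma K_dY x X Y : is_derive (fun t => K x X t) Y (KY x X Y).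
Proof. unfold K, KY, inversion_eq, b; auto_derive; [easy | ring]. Qed.

Lemma inversion_continuous3 :
  continuous3 K /\ continuous3 Kx /\ continuous3 KX /\ continuous3 KY.
Proof.
  unfold K, Kx, KX, KY, inversion_eq, a, b.
  repeat split; intros x X Y; repeat continuity_step;
    eauto using is_sol_continuous, is_sol_continuous_Derive.
Qed.

Lemma ctxX_C1 p : snd p <> 0 -> C1_at (ctxX v1 v2 X0 s) p.
Proof.
  intro Hp; apply (C1_at_ext (fun x Phi => X0 + s * / Wc *
    ((Phi ^ 2 * v1 x * v2 x + Derive v1 x * Derive v2 x) /
     (Phi ^ 2 * v1 x ^ 2 + Derive v1 x ^ 2)))).
  { intros; unfold ctxX; now rewrite HW. }
  pose proof (ctx_den_pos (fst p) (snd p) Hp); unfold ctx_den in *.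
  repeat C1_step; eauto; lra.
Qed.

Lemma ctxY_C1 p : snd p <> 0 -> C1_at (ctxY v1) p.
Proof.
  intro Hp; pose proof (ctx_den_pos (fst p) (snd p) Hp); unfold ctxY, ctx_den in *.
  repeat C1_step; eauto; lra.
Qed.

Lemma locally_Dom {T : UniformSpace} (u w : T -> R) p :
  continuous u p -> continuous w p -> Dom h (u p) (w p) -> locally p (fun q => Dom h (u q) (w q)).
Proof.
  intros Cu Cw [Hpos Hh]; apply filter_and.
  - exact (locally_preimage w _ p Cw (open_gt 0) Hpos).
  - apply (filter_imp (fun q => w q ^ 2 - h (u q) <> 0));
      [intros q Hq Z; apply Hq; rewrite Z; ring |].
    apply (locally_preimage (fun q => w q ^ 2 - h (u q)) (fun y => y <> 0));
      [| apply open_neq | lra].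
    repeat continuity_step; auto.
Qed.

Section AtPoint.
Variables (x0 Phi0 d e : R) (g : R -> R -> R).
Let X1 := ctxX v1 v2 X0 s x0 Phi0.
Let Y1 := ctxY v1 x0 Phi0.
Hypothesis g_root : forall X Y, Rabs (X - X1) < e -> Rabs (Y - Y1) < e ->
  Rabs (g X Y - x0) < d /\ K (g X Y) X Y = 0.
Hypothesis g_unique : forall X Y x, Rabs (X - X1) < e -> Rabs (Y - Y1) < e ->
  Rabs (x - x0) < d -> K x X Y = 0 -> x = g X Y.
Hypothesis g_C1 : forall X Y, Rabs (X - X1) < e -> Rabs (Y - Y1) < e -> C1_at g (X, Y).

Definition inverse_Phi (X Y : R) : R := Phi_of (g X Y) X Y.

Definition chart_dom (p : R * R) : Prop :=
  Rabs (fst p - x0) < d /\ Dom h (fst p) (snd p) /\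
  Rabs (ctxX v1 v2 X0 s (fst p) (snd p) - X1) < e /\ Rabs (ctxY v1 (fst p) (snd p) - Y1) < e.

Definition chart_img (w : R * R) : Prop :=
  Rabs (fst w - X1) < e /\ Rabs (snd w - Y1) < e /\
  Dom h (g (fst w) (snd w)) (inverse_Phi (fst w) (snd w)).

Lemma inverse_Phi_C1 X Y : Rabs (X - X1) < e -> Rabs (Y - Y1) < e ->
  0 < inverse_Phi X Y -> C1_at inverse_Phi (X, Y).
Proof.
  intros HX HY Hpos; assert (Cg := g_C1 X Y HX HY).
  unfold inverse_Phi, Phi_of, a, b in *; repeat C1_step; eauto.
  cbn [fst snd]; intro Z; rewrite Z, Rdiv_0_r in Hpos; lra.
Qed.

Lemma chart_dom_open p : chart_dom p -> locally p chart_dom.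
Proof.
  intros [Hx [HD [HX HY]]].
  assert (CX := C1_at_continuous _ _ (ctxX_C1 p ltac:(destruct HD; lra))).
  assert (CY := C1_at_continuous _ _ (ctxY_C1 p ltac:(destruct HD; lra))).
  apply filter_and; [| apply filter_and; [| apply filter_and]].
  - apply locally_Rabs_lt; [apply continuous_fst' | exact Hx].
  - apply (locally_Dom (fun q => fst q) (fun q => snd q));
      [apply continuous_fst' | apply continuous_snd' | exact HD].
  - exact (locally_Rabs_lt (fun q : R * R => ctxX v1 v2 X0 s (fst q) (snd q)) X1 e p CX HX).
  - exact (locally_Rabs_lt (fun q : R * R => ctxY v1 (fst q) (snd q)) Y1 e p CY HY).
Qed.

Lemma chart_img_open w : chart_img w -> locally w chart_img.
Proof.
  destruct w as [X Y]; intros [HX [HY HD]]; cbn [fst snd] in *.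
  assert (Cg := C1_at_continuous _ _ (g_C1 X Y HX HY)).
  assert (CP := C1_at_continuous _ _ (inverse_Phi_C1 X Y HX HY (proj1 HD))).
  apply filter_and; [| apply filter_and].
  - apply locally_Rabs_lt; [apply continuous_fst' | exact HX].
  - apply locally_Rabs_lt; [apply continuous_snd' | exact HY].
  - now apply (locally_Dom (fun q => g (fst q) (snd q)) (fun q => inverse_Phi (fst q) (snd q))).
Qed.

Lemma chart_dom_to_img p : chart_dom p ->
  chart_img (ctxX v1 v2 X0 s (fst p) (snd p), ctxY v1 (fst p) (snd p)) /\
  g (ctxX v1 v2 X0 s (fst p) (snd p)) (ctxY v1 (fst p) (snd p)) = fst p /\
  inverse_Phi (ctxX v1 v2 X0 s (fst p) (snd p)) (ctxY v1 (fst p) (snd p)) = snd p.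
Proof.
  destruct p as [x Phi]; intros [Hx [HD [HX HY]]]; cbn [fst snd] in *.
  assert (Eg : g (ctxX v1 v2 X0 s x Phi) (ctxY v1 x Phi) = x).
  { symmetry; apply g_unique; auto; apply K_ctx; destruct HD; lra. }
  assert (EP : inverse_Phi (ctxX v1 v2 X0 s x Phi) (ctxY v1 x Phi) = Phi).
  { unfold inverse_Phi; rewrite Eg; apply Phi_of_ctx; destruct HD; lra. }
  repeat split; auto; cbn [fst snd]; rewrite ?Eg, ?EP; apply HD.
Qed.

Lemma chart_img_to_dom w : chart_img w ->
  chart_dom (g (fst w) (snd w), inverse_Phi (fst w) (snd w)) /\
  ctxX v1 v2 X0 s (g (fst w) (snd w)) (inverse_Phi (fst w) (snd w)) = fst w /\
  ctxY v1 (g (fst w) (snd w)) (inverse_Phi (fst w) (snd w)) = snd w.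
Proof.
  destruct w as [X Y]; intros [HX [HY HD]]; cbn [fst snd] in *.
  destruct (g_root X Y HX HY) as [Hg Kg].
  destruct (ctx_Phi_of (g X Y) X Y Kg (proj1 HD)) as [EX EY].
  change (Phi_of (g X Y) X Y) with (inverse_Phi X Y) in EX, EY.
  repeat split; auto; cbn [fst snd]; rewrite ?EX, ?EY; auto; apply HD.
Qed.

End AtPoint.

Lemma local_diffeo_ctx : local_diffeo (Dom h) (ctxX v1 v2 X0 s) (ctxY v1).
Proof.
  intros x0 Phi0 Dom0.
  destruct inversion_continuous3 as [CK [CKx [CKX CKY]]].
  destruct (implicit_function K Kx KX KY x0 (ctxX v1 v2 X0 s x0 Phi0) (ctxY v1 x0 Phi0)
    K_dx K_dX K_dY CK CKx CKX CKY) as [d [e [g [Hd [He [G1 [G2 G3]]]]]]];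
    [apply K_ctx; destruct Dom0; lra | now apply Kx_ctx_neq0 |].
  exists (chart_dom x0 Phi0 d e), (chart_img x0 Phi0 e g), g, (inverse_Phi g).
  split; [intros p Vp; now apply chart_dom_open |].
  split; [intros w Ww; now apply (chart_img_open x0 Phi0 e g G3) |].
  split.
  { unfold chart_dom; cbn [fst snd]; rewrite !Rminus_eq_0, Rabs_R0; auto. }
  split; [now intros p [_ [HD _]] |].
  split; [intros p Vp; now apply (chart_dom_to_img x0 Phi0 d e g G2) |].
  split; [intros w Ww; now apply (chart_img_to_dom x0 Phi0 d e g G1) |].
  split; [apply C1_on_of_C1_at; intros p [_ [[HP _] _]]; apply ctxX_C1; lra |].
  split; [apply C1_on_of_C1_at; intros p [_ [[HP _] _]]; apply ctxY_C1; lra |].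
  split; apply C1_on_of_C1_at; intros [X Y] [HX [HY [HP _]]];
    [now apply G3 | now apply (inverse_Phi_C1 x0 Phi0 e g G3)].
Qed.

End LocalInverse.

(** * The complete integral *)

Lemma lin_comb_nonzero u1 u2 A B : lin_indep u1 u2 -> ~ (A = 0 /\ B = 0) ->
  exists y, A * u1 y + B * u2 y <> 0.
Proof.
  intros I N; apply NNPP; intro H; apply N, I; intro x.
  apply NNPP; intro H'; apply H; now exists x.
Qed.

Lemma jacobian_rows_independent p q Phi m n : Phi <> 0 -> (p <> 0 \/ q <> 0) ->
  Phi ^ 2 * p * m + q * n = 0 ->
  q * (q ^ 2 - 3 * Phi ^ 2 * p ^ 2) * m + p * (Phi ^ 2 * p ^ 2 - 3 * q ^ 2) * n = 0 ->
  - Phi ^ 2 * p * (3 * q ^ 2 - Phi ^ 2 * p ^ 2) * m + q * (3 * Phi ^ 2 * p ^ 2 - q ^ 2) * n = 0 ->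
  m = 0 /\ n = 0.
Proof.
  intros HPhi Hpq e1 e2 e3.
  assert (D_pos := sum_sq_pos Phi p q HPhi Hpq).
  assert (P2 := pow2_gt_0 Phi HPhi).
  (* eliminating [n] with the first row leaves [m (q^2 - Phi^2 p^2) = 0] and [p q m = 0] *)
  assert (Z1 : m * (q ^ 2 - Phi ^ 2 * p ^ 2) * (Phi ^ 2 * p ^ 2 + q ^ 2) = 0).
  { transitivity (q * (q * (q ^ 2 - 3 * Phi ^ 2 * p ^ 2) * m
                       + p * (Phi ^ 2 * p ^ 2 - 3 * q ^ 2) * n)
      - p * (Phi ^ 2 * p ^ 2 - 3 * q ^ 2) * (Phi ^ 2 * p * m + q * n)); [ring |].
    rewrite e1, e2; ring. }
  assert (Z2 : Phi ^ 2 * (p * q * m) * (Phi ^ 2 * p ^ 2 + q ^ 2) = 0).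
  { transitivity (- / 2 * (q * (- Phi ^ 2 * p * (3 * q ^ 2 - Phi ^ 2 * p ^ 2) * m
      + q * (3 * Phi ^ 2 * p ^ 2 - q ^ 2) * n)
      - (3 * Phi ^ 2 * p ^ 2 - q ^ 2) * q * (Phi ^ 2 * p * m + q * n))); [field |].
    rewrite e1, e3; ring. }
  apply Rmult_integral in Z1; destruct Z1 as [Z1 | Z1]; [| lra].
  apply Rmult_integral in Z2; destruct Z2 as [Z2 | Z2]; [| lra].
  apply Rmult_integral in Z2; destruct Z2 as [Z2 | Z2]; [lra |].
  assert (Hm : m = 0).
  { destruct (Req_dec m 0) as [M | M]; [exact M | exfalso].
    apply Rmult_integral in Z1; destruct Z1 as [Z1 | Z1]; [contradiction |].
    apply Rmult_integral in Z2; destruct Z2 as [Z2 | Z2]; [| contradiction].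
    apply Rmult_integral in Z2.
    destruct Hpq as [Hp | Hq]; destruct Z2 as [Z2 | Z2]; subst; try contradiction;
      [pose proof (pow2_gt_0 p Hp) | pose proof (pow2_gt_0 q Hq)]; nra. }
  subst m; split; [reflexivity |].
  destruct (Req_dec n 0) as [N | N]; [exact N | exfalso].
  assert (Hq : q = 0) by (apply (Rmult_eq_reg_r n); lra).
  subst q; destruct Hpq as [Hp | Hq]; [| lra].
  pose proof (pow2_gt_0 p Hp).
  assert (Z : p * (Phi ^ 2 * p ^ 2) * n = 0) by (rewrite <- e2; ring).
  apply Rmult_integral in Z; destruct Z as [Z | Z]; [| contradiction].
  apply Rmult_integral in Z; destruct Z as [Z | Z]; [contradiction | nra].
Qed.

Section ParameterFamily.
Variables h u1 u2 : R -> R.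
Hypotheses (h_cont : forall x, continuous h x) (S1 : is_sol h u1) (S2 : is_sol h u2)
  (indep : lin_indep u1 u2).

Let den A B x Phi := Phi ^ 2 * (A * u1 x + B * u2 x) ^ 2 + (A * Derive u1 x + B * Derive u2 x) ^ 2.

Lemma ctx_den_lin_comb A B x Phi : ctx_den (fun t => A * u1 t + B * u2 t) x Phi = den A B x Phi.
Proof. unfold ctx_den, den; rewrite Derive_lin_comb by (apply S1 || apply S2); reflexivity. Qed.

Lemma den_pos A B x Phi : ~ (A = 0 /\ B = 0) -> Phi <> 0 -> 0 < den A B x Phi.
Proof.
  intros N HPhi; rewrite <- (ctx_den_lin_comb A B x Phi); apply sum_sq_pos; [exact HPhi |].
  apply (is_sol_nonzero_data h h_cont (fun t => A * u1 t + B * u2 t));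
    [now apply is_sol_lin_comb |].
  now apply lin_comb_nonzero.
Qed.

Lemma Yfam_eq A B x Phi : Yfam u1 u2 A B x Phi = Phi / den A B x Phi.
Proof. unfold Yfam, ctxY; now rewrite <- (ctx_den_lin_comb A B x Phi). Qed.

Lemma pdx_Yfam A B x Phi : ~ (A = 0 /\ B = 0) -> Phi <> 0 ->
  pdx (Yfam u1 u2 A B) x Phi = - 2 * Phi * (A * u1 x + B * u2 x) *
    (A * Derive u1 x + B * Derive u2 x) * (Phi ^ 2 - h x) / den A B x Phi ^ 2.
Proof.
  intros N HPhi; pose proof (den_pos A B x Phi N HPhi).
  rewrite <- (ctx_den_lin_comb A B x Phi), <- (Derive_lin_comb u1 u2) by (apply S1 || apply S2).
  apply is_derive_unique, (ctxY_dx h (fun t => A * u1 t + B * u2 t));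
    [now apply is_sol_lin_comb | rewrite (ctx_den_lin_comb A B x Phi); lra].
Qed.

Lemma pdy_Yfam A B x Phi : ~ (A = 0 /\ B = 0) -> Phi <> 0 ->
  pdy (Yfam u1 u2 A B) x Phi = ((A * Derive u1 x + B * Derive u2 x) ^ 2 -
    Phi ^ 2 * (A * u1 x + B * u2 x) ^ 2) / den A B x Phi ^ 2.
Proof.
  intros N HPhi; pose proof (den_pos A B x Phi N HPhi).
  rewrite <- (ctx_den_lin_comb A B x Phi), <- (Derive_lin_comb u1 u2) by (apply S1 || apply S2).
  apply is_derive_unique, (ctxY_dPhi (fun t => A * u1 t + B * u2 t)).
  rewrite (ctx_den_lin_comb A B x Phi); lra.
Qed.

Lemma Yfam_solves_PDE A B : ~ (A = 0 /\ B = 0) -> solves_PDE h (Dom h) (Yfam u1 u2 A B).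
Proof.
  intros N x Phi [HPhi Hh].
  pose proof (den_pos A B x Phi N ltac:(lra)).
  assert (Nu : ctx_den (fun t => A * u1 t + B * u2 t) x Phi <> 0)
    by (rewrite (ctx_den_lin_comb A B x Phi); lra).
  split; [eexists; apply ctxY_dx; [now apply is_sol_lin_comb | exact Nu] |].
  split; [eexists; now apply ctxY_dPhi |].
  rewrite pdx_Yfam, pdy_Yfam, Yfam_eq by (auto; lra).
  unfold den in *; field; repeat split; lra.
Qed.

Section Lines.
Variables (a b : R -> R) (da db l0 x Phi : R).
Hypotheses (Ha : is_derive a l0 da) (Hb : is_derive b l0 db)
  (N0 : ~ (a l0 = 0 /\ b l0 = 0)) (HPhi : Phi <> 0).

Let p := a l0 * u1 x + b l0 * u2 x.
Let q := a l0 * Derive u1 x + b l0 * Derive u2 x.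
Let dp := da * u1 x + db * u2 x.
Let dq := da * Derive u1 x + db * Derive u2 x.
Let D := den (a l0) (b l0) x Phi.

Lemma locally_params_nonzero : locally l0 (fun l => ~ (a l = 0 /\ b l = 0)).
Proof.
  destruct (Req_dec (a l0) 0) as [Z | Z].
  - eapply filter_imp; [intros l Hl [_ Hl']; exact (Hl Hl') |].
    apply (locally_preimage b (fun y => y <> 0)); [| apply open_neq | tauto].
    exact (ex_derive_continuous b l0 (ex_intro _ db Hb)).
  - eapply filter_imp; [intros l Hl [Hl' _]; exact (Hl Hl') |].
    apply (locally_preimage a (fun y => y <> 0)); [| apply open_neq | exact Z].
    exact (ex_derive_continuous a l0 (ex_intro _ da Ha)).
Qed.

Ltac line_derive :=
  unfold D, den in *; auto_derive;
  [repeat split; try solve [easy | eexists; eauto]; simpl in *; nra |];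
  eta_Derive; rewrite (is_derive_unique _ _ _ Ha), (is_derive_unique _ _ _ Hb);
  unfold p, q, dp, dq; field; rewrite ?Rpow_mult_distr; lra.

Lemma Yfam_line_derive : is_derive (fun l : R => Yfam u1 u2 (a l) (b l) x Phi) l0
  (- 2 * Phi / D ^ 2 * (Phi ^ 2 * p * dp + q * dq)).
Proof.
  pose proof (den_pos (a l0) (b l0) x Phi N0 HPhi).
  apply (is_derive_ext (fun l => Phi / den (a l) (b l) x Phi)); [intro; now rewrite Yfam_eq |].
  line_derive.
Qed.

Lemma pdx_Yfam_line_derive : is_derive (fun l : R => pdx (Yfam u1 u2 (a l) (b l)) x Phi) l0
  (2 * Phi * (h x - Phi ^ 2) / D ^ 3 *
   (q * (q ^ 2 - 3 * Phi ^ 2 * p ^ 2) * dp + p * (Phi ^ 2 * p ^ 2 - 3 * q ^ 2) * dq)).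
Proof.
  pose proof (den_pos (a l0) (b l0) x Phi N0 HPhi).
  apply (is_derive_ext_loc (fun l => - 2 * Phi * (a l * u1 x + b l * u2 x) *
    (a l * Derive u1 x + b l * Derive u2 x) * (Phi ^ 2 - h x) / den (a l) (b l) x Phi ^ 2)).
  { eapply filter_imp; [| exact locally_params_nonzero]; intros l Hl.
    now rewrite pdx_Yfam. }
  line_derive.
Qed.

Lemma pdy_Yfam_line_derive : is_derive (fun l : R => pdy (Yfam u1 u2 (a l) (b l)) x Phi) l0
  (2 / D ^ 3 * (- Phi ^ 2 * p * (3 * q ^ 2 - Phi ^ 2 * p ^ 2) * dp +
                q * (3 * Phi ^ 2 * p ^ 2 - q ^ 2) * dq)).
Proof.
  pose proof (den_pos (a l0) (b l0) x Phi N0 HPhi).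
  apply (is_derive_ext_loc (fun l => ((a l * Derive u1 x + b l * Derive u2 x) ^ 2 -
    Phi ^ 2 * (a l * u1 x + b l * u2 x) ^ 2) / den (a l) (b l) x Phi ^ 2)).
  { eapply filter_imp; [| exact locally_params_nonzero]; intros l Hl.
    now rewrite pdy_Yfam. }
  line_derive.
Qed.

End Lines.

Lemma Yfam_complete_integral :
  complete_integral h (Dom h) (fun A B => ~ (A = 0 /\ B = 0)) (Yfam u1 u2).
Proof.
  split; [exact Yfam_solves_PDE |].
  intros A B x Phi N [HPhi Hh]; cbv zeta.
  assert (HPhi' : Phi <> 0) by lra.
  assert (DA := fun l0 => is_derive_id l0 : is_derive (fun l : R => l) l0 1).
  assert (DB := fun c l0 => is_derive_const c l0 : is_derive (fun _ : R => c) l0 0).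
  pose proof (Yfam_line_derive _ _ _ _ _ x Phi (DA A) (DB B A) N HPhi') as A1.
  pose proof (pdx_Yfam_line_derive _ _ _ _ _ x Phi (DA A) (DB B A) N HPhi') as A2.
  pose proof (pdy_Yfam_line_derive _ _ _ _ _ x Phi (DA A) (DB B A) N HPhi') as A3.
  pose proof (Yfam_line_derive _ _ _ _ _ x Phi (DB A B) (DA B) N HPhi') as B1.
  pose proof (pdx_Yfam_line_derive _ _ _ _ _ x Phi (DB A B) (DA B) N HPhi') as B2.
  pose proof (pdy_Yfam_line_derive _ _ _ _ _ x Phi (DB A B) (DA B) N HPhi') as B3.
  cbv beta in A1, A2, A3, B1, B2, B3.
  do 6 (split; [eexists; eassumption |]).
  intros al be E1 E2 E3.
  rewrite (is_derive_unique _ _ _ A1), (is_derive_unique _ _ _ B1) in E1.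
  rewrite (is_derive_unique _ _ _ A2), (is_derive_unique _ _ _ B2) in E2.
  rewrite (is_derive_unique _ _ _ A3), (is_derive_unique _ _ _ B3) in E3.
  assert (Dp := den_pos A B x Phi N HPhi'); unfold den in *.
  set (p := A * u1 x + B * u2 x) in *; set (q := A * Derive u1 x + B * Derive u2 x) in *.
  set (m := al * u1 x + be * u2 x); set (n := al * Derive u1 x + be * Derive u2 x).
  assert (Hpq : p <> 0 \/ q <> 0).
  { destruct (Req_dec p 0) as [Zp | Zp]; [right; intro Zq | now left].
    rewrite Zp, Zq in Dp; simpl in Dp; lra. }
  assert (cancel : forall k j z, k <> 0 -> k / (Phi ^ 2 * p ^ 2 + q ^ 2) ^ j * z = 0 -> z = 0).
  { intros k j z Hk Hz; apply Rmult_integral in Hz; destruct Hz as [Hz | Hz]; [exfalso | exact Hz].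
    revert Hz; apply Rmult_integral_contrapositive_currified;
      [exact Hk | apply Rinv_neq_0_compat, pow_nonzero; lra]. }
  destruct (jacobian_rows_independent p q Phi m n HPhi' Hpq) as [Hm Hn].
  - apply (cancel (- 2 * Phi) 2%nat); [lra | rewrite <- E1; unfold m, n; ring].
  - apply (cancel (2 * Phi * (h x - Phi ^ 2)) 3%nat); [| rewrite <- E2; unfold m, n; ring].
    apply Rmult_integral_contrapositive_currified; lra.
  - apply (cancel 2 3%nat); [lra | rewrite <- E3; unfold m, n; ring].
  - exact (det2_neq0_kernel _ _ _ _ al be (wronsk_neq0 h h_cont u1 u2 x S1 S2 indep) Hm Hn).
Qed.

End ParameterFamily.

Theorem corollary2p15 (h u1 u2 : R -> R)
  (h_cont : forall x, continuous h x)
  (sol1 : is_sol h u1) (sol2 : is_sol h u2) (indep : lin_indep u1 u2) :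
  (* (i) *)
  (forall a b c d : R, a * d - b * c <> 0 ->
     let v1 := fun x => a * u1 x + b * u2 x in
     let v2 := fun x => c * u1 x + d * u2 x in
     is_sol h v1 /\ is_sol h v2 /\ lin_indep v1 v2 /\
     (forall X0 s : R, (s = 1 \/ s = -1) ->
        local_diffeo (Dom h) (ctxX v1 v2 X0 s) (ctxY v1) /\
        pullback_gH_is_gh h (Dom h) (ctxX v1 v2 X0 s) (ctxY v1))) /\
  (* (ii) *)
  complete_integral h (Dom h) (fun A B => ~ (A = 0 /\ B = 0)) (Yfam u1 u2).
Proof.
  split; [| exact (Yfam_complete_integral h u1 u2 h_cont sol1 sol2 indep)].
  intros a b c d Hdet; cbv zeta.
  assert (S1 := is_sol_lin_comb h u1 u2 a b sol1 sol2).
  assert (S2 := is_sol_lin_comb h u1 u2 c d sol1 sol2).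
  set (Wc := (a * d - b * c) * wronsk u1 u2 0).
  assert (HW : forall x,
    wronsk (fun t => a * u1 t + b * u2 t) (fun t => c * u1 t + d * u2 t) x = Wc).
  { intro x; rewrite (wronsk_lin_comb h) by assumption.
    unfold Wc; now rewrite (wronsk_constant h u1 u2 x 0). }
  assert (Wc_neq0 : Wc <> 0).
  { apply Rmult_integral_contrapositive_currified; [exact Hdet |].
    now apply (wronsk_neq0 h). }
  split; [exact S1 | split; [exact S2 | split; [now apply lin_indep_lin_comb |]]].
  intros X0 s Hs; split.
  - exact (local_diffeo_ctx h _ _ X0 s Wc h_cont S1 S2 HW Wc_neq0 Hs).
  - exact (pullback_gH_ctx h _ _ X0 s Wc S1 S2 HW Wc_neq0 Hs).
Qed.
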